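(* The following hold: (1) $\mathsf{SLT}\subsetneq\mathsf{LLT}\subsetneq\mathsf{LLT}_\cup\subseteq\mathsf{LLT}_{\cup\cap}\subsetneq\mathsf{LTT}$ and $\mathsf{SLT}_\cup\subsetneq\mathsf{LLT}_\cup$. (2) $\mathsf{LLT}$ and $\mathsf{LT}$ are incomparable (neither contains the other), and $\mathsf{LLT}_\cup$ and $\mathsf{LT}$ are incomparable. (3) $\mathsf{LTT}$ equals the closure of $\mathsf{LLT}$ under union, intersection and complement.
   Context: Let $\Sigma$ be a finite alphabet. For a word $w$ and $\ell\in\mathbb N_0$, $p_\ell(w)$ (resp. $s_\ell(w)$) is the prefix (resp. suffix) of $w$ of length $\ell$ if $|w|\ge\ell$ and $w$ otherwise; $I_\ell(w)$ is the set of infixes of $w$ of length exactly $\ell$; $|w|_m$ is the number of occurrences of $m$ as an infix of $w$; $\Sigma^{\le\ell}$ is the set of words of length $\le\ell$. The empty word is disregarded in all language comparisons. $\mathsf{SLT}$: $L$ is strictly locally testable if there are $\ell\in\mathbb N_+$, $\pi,\sigma\subseteq\Sigma^{\le\ell}$, $\mu\subseteq\Sigma^\ell$ with $w\in L\iff p_{\ell-1}(w)\in\pi$, $I_\ell(w)\subseteq\mu$, $s_{\ell-1}(w)\in\sigma$. $\mathsf{LT}$: $L$ is locally testable if there is $\ell\in\mathbb N_+$ such that whenever $p_{\ell-1}(w_1)=p_{\ell-1}(w_2)$, $I_\ell(w_1)=I_\ell(w_2)$ and $s_{\ell-1}(w_1)=s_{\ell-1}(w_2)$, then $w_1\in L\iff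 w_2\in L$. $\mathsf{LTT}$: $L$ is locally threshold testable if there are $\theta,\ell\in\mathbb N_+$ such that for all $w_1,w_2$ with $p_{\ell-1}(w_1)=p_{\ell-1}(w_2)$, $s_{\ell-1}(w_1)=s_{\ell-1}(w_2)$, and for every $m\in\Sigma^\ell$ ($|w_i|_m<\theta$ for some $i\in\{1,2\}$ implies $|w_1|_m=|w_2|_m$), we have $w_1\in L\iff w_2\in L$. $\mathsf{LLT}$: for $\ell\in\mathbb N_0$, $\theta\in\mathbb R_{\ge0}$, $\pi,\sigma\subseteq\Sigma^{\le\ell-1}$, $\alpha\colon\Sigma^\ell\to\mathbb R_{\ge0}$, $\mathrm{LLin}_\ell(\pi,\sigma,\alpha,\theta)$ is the set of $w\in\Sigma^+$ with $p_{\ell-1}(w)\in\pi$, $s_{\ell-1}(w)\in\sigma$ and $\sum_{m\in\Sigma^\ell}\alpha(m)|w|_m\le\theta$; $\mathsf{LLT}$ is the class of all such languages (over all finite alphabets). $\mathsf{SLT}_\cup$, $\mathsf{LLT}_\cup$ denote closures under finite union; $\mathsf{LLT}_{\cup\cap}$ the closure of $\mathsf{LLT}$ under finite union and intersection. *)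

From mathcomp Require Import all_boot all_order all_algebra.
From mathcomp Require Import Rstruct.
From Stdlib Require Rdefinitions.
Set Implicit Arguments. Unset Strict Implicit. Unset Printing Implicit Defensive.
Import GRing.Theory Num.Theory.

Definition lang (S : finType) := seq S -> Prop.

Definition lang_eq (S : finType) (L1 L2 : lang S) : Prop :=
  forall w : seq S, w <> [::] -> (L1 w <-> L2 w).

Definition lclass := forall S : finType, lang S -> Prop.

Definition csub (C1 C2 : lclass) : Prop := forall (S : finType) (L : lang S), C1 S L -> C2 S L.
Definition csubneq (C1 C2 : lclass) : Prop :=
  csub C1 C2 /\ exists (S : finType) (L : lang S), C2 S L /\ ~ C1 S L.
Definition cincomparable (C1 C2 : lclass) : Prop := ~ csub C1 C2 /\ ~ csub C2 C1.
Definition ceq (C1 C2 : lclass) : Prop := forall (S : finType) (L : lang S), C1 S L <-> C2 S L.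

Definition pref (S : finType) (l : nat) (w : seq S) : seq S := take l w.
Definition suff (S : finType) (l : nat) (w : seq S) : seq S := drop (size w - l) w.

(* |w|_m : number of positions i (0 <= i <= |w|) at which m occurs in w.
   For m = [::] this is |w|+1. *)
Definition occ (S : finType) (m w : seq S) : nat :=
  count (fun i => take (size m) (drop i w) == m) (iota 0 (size w).+1).

Definition infixes (S : finType) (l : nat) (w : seq S) : seq S -> Prop :=
  fun m => size m = l /\ infix m w.

Definition SLT : lclass := fun S L =>
  exists (l : nat) (pi sigma mu : seq S -> Prop),
    0 < l /\
    (forall u, pi u -> size u <= l) /\ (forall u, sigma u -> size u <= l) /\
    (forall u, mu u -> size u = l) /\
    forall w : seq S, w <> [::] ->
      (L w <-> (pi (pref l.-1 w) /\ (forall m, infixes l w m -> mu m) /\ sigma (suff l.-1 w))).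

Definition LT : lclass := fun S L =>
  exists l : nat, 0 < l /\
    forall w1 w2 : seq S, w1 <> [::] -> w2 <> [::] ->
      pref l.-1 w1 = pref l.-1 w2 ->
      (forall m, infixes l w1 m <-> infixes l w2 m) ->
      suff l.-1 w1 = suff l.-1 w2 ->
      (L w1 <-> L w2).

Definition LTT : lclass := fun S L =>
  exists theta l : nat, 0 < theta /\ 0 < l /\
    forall w1 w2 : seq S, w1 <> [::] -> w2 <> [::] ->
      pref l.-1 w1 = pref l.-1 w2 ->
      suff l.-1 w1 = suff l.-1 w2 ->
      (forall m : seq S, size m = l ->
         ((occ m w1 < theta)%N \/ (occ m w2 < theta)%N) -> occ m w1 = occ m w2) ->
      (L w1 <-> L w2).

Local Open Scope ring_scope.
Definition LLin (S : finType) (l : nat) (pi sigma : seq S -> Prop)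
  (alpha : l.-tuple S -> Rdefinitions.R) (theta : Rdefinitions.R) : lang S :=
  fun w => w <> [::] /\ pi (pref l.-1 w) /\ sigma (suff l.-1 w) /\
    \sum_(m : l.-tuple S) alpha m * (occ (tval m) w)%:R <= theta.

(* pi, sigma range over subsets of Sigma^{<= l-1} (truncated subtraction:
   for l = 0 this is Sigma^{<= 0} = {eps}). *)
Definition LLT : lclass := fun S L =>
  exists (l : nat) (pi sigma : seq S -> Prop) (alpha : l.-tuple S -> Rdefinitions.R) (theta : Rdefinitions.R),
    (forall u, pi u -> (size u <= l.-1)%N) /\ (forall u, sigma u -> (size u <= l.-1)%N) /\
    (forall m, 0 <= alpha m) /\ 0 <= theta /\
    lang_eq L (LLin pi sigma alpha theta).
Local Close Scope ring_scope.

Inductive gen_U (C : lclass) (S : finType) : lang S -> Prop :=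
| gU_base L : C S L -> gen_U C L
| gU_union L1 L2 : gen_U C L1 -> gen_U C L2 -> gen_U C (fun w => L1 w \/ L2 w).

Inductive gen_UI (C : lclass) (S : finType) : lang S -> Prop :=
| gUI_base L : C S L -> gen_UI C L
| gUI_union L1 L2 : gen_UI C L1 -> gen_UI C L2 -> gen_UI C (fun w => L1 w \/ L2 w)
| gUI_inter L1 L2 : gen_UI C L1 -> gen_UI C L2 -> gen_UI C (fun w => L1 w /\ L2 w).

(* complement is taken within Sigma^+ (the empty word being disregarded) *)
Inductive gen_UIC (C : lclass) (S : finType) : lang S -> Prop :=
| gUIC_base L : C S L -> gen_UIC C L
| gUIC_union L1 L2 : gen_UIC C L1 -> gen_UIC C L2 -> gen_UIC C (fun w => L1 w \/ L2 w)
| gUIC_inter L1 L2 : gen_UIC C L1 -> gen_UIC C L2 -> gen_UIC C (fun w => L1 w /\ L2 w)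
| gUIC_compl L1 : gen_UIC C L1 -> gen_UIC C (fun w => ~ L1 w).

Definition closeU (C : lclass) : lclass := fun S L => exists L', gen_U C L' /\ lang_eq L L'.
Definition closeUI (C : lclass) : lclass := fun S L => exists L', gen_UI C L' /\ lang_eq L L'.
Definition closeUIC (C : lclass) : lclass := fun S L => exists L', gen_UIC C L' /\ lang_eq L L'.

Definition SLT_U : lclass := closeU SLT.
Definition LLT_U : lclass := closeU LLT.
Definition LLT_UI : lclass := closeUI LLT.

(* A weighted count sum (alpha, theta) with nonnegative weights can only stay below theta
   while every factor of positive weight occurs fewer than about theta / alpha times, so
   membership in an LLT language only depends on the prefix, the suffix and the factor counts
   capped at some threshold: LLT, and with it its Boolean closure, is contained in LTT.
   Conversely, an LTT language is the finite union of the classes of words with given prefix,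
   suffix and capped counts, and each class is an intersection of LLT languages and their
   complements.  Nonnegative weights also make LLT languages closed under lowering factor
   counts, a property kept by unions and intersections.  The separations use languages over
   {false, true}: "at most one true" is LLT, but 0^n true 0^n and 0^n true 0^n true 0^n are
   locally indistinguishable, so it is neither LT nor a union of SLT languages; "starts or
   ends with true" is a union of two LLT languages but not LLT; "contains true" is LT and
   LTT but not closed under lowering counts. *)
From mathcomp Require Import all_boot all_order all_algebra.
From mathcomp Require Import Rstruct zify.
From Stdlib Require Import Classical ClassicalEpsilon.
Set Implicit Arguments. Unset Strict Implicit. Unset Printing Implicit Defensive.
Import Order.TTheory GRing.Theory Num.Theory.

Section Occurrences.
Variable S : finType.
Implicit Types m u v w : seq S.

Lemma occ_nil m : occ m [::] = ([::] == m).
Proof. by rewrite /occ /= addn0. Qed.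

Lemma occ_cons m y w : occ m (y :: w) = (take (size m) (y :: w) == m) + occ m w.
Proof.
rewrite /occ; change (iota 0 (size (y :: w)).+1) with (0 :: iota (1 + 0) (size w).+1).
by rewrite iotaDl /= count_map drop0.
Qed.

Lemma occ_gt0 m w : (0 < occ m w) = infix m w.
Proof.
elim: w => [|y w IH]; first by rewrite occ_nil infixs0 eq_sym; case: eqP.
by rewrite occ_cons infix_consl -IH prefixE; case: eqP.
Qed.

Lemma leq_occ_catl m u w : occ m w <= occ m (u ++ w).
Proof. by elim: u => [|y u IH] //=; rewrite occ_cons; lia. Qed.

Lemma leq_occ_catr m w v : occ m w <= occ m (w ++ v).
Proof.
elim: w => [|y w IH] /=.
  by rewrite occ_nil; case: eqP => [<-|] //=; rewrite occ_gt0 infix0s.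
rewrite !occ_cons; apply: leq_add => //; case: eqP => // pre_m.
suff -> : take (size m) ((y :: w) ++ v) = m by rewrite eqxx.
rewrite take_cat; case: ltnP => // le_wm.
move: (f_equal size pre_m); rewrite size_take.
case: ltnP => [lt_m|_ size_wm]; first by rewrite ltnNge le_wm in lt_m.
by rewrite take_oversize // in pre_m; rewrite -size_wm subnn take0 cats0.
Qed.

Lemma occ_seq1 y w : occ [:: y] w = count_mem y w.
Proof.
elim: w => [|z w IH]; first by rewrite occ_nil.
by rewrite occ_cons IH /= take0 eqseq_cons andbT.
Qed.

Lemma sum_pred1_nat (z : S) : \sum_(x : S) (z == x : nat) = 1.
Proof. by rewrite (bigD1 z) //= eqxx big1 // => x /negPf; rewrite eq_sym => ->. Qed.

Lemma eq_take_sum_rcons m s :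
  (take (size m) s == m) = \sum_(x : S) (take (size m).+1 s == rcons m x) + (s == m) :> nat.
Proof.
have [lt_ms | le_sm] := ltnP (size m) (size s).
  have x0 : S by case: s lt_ms => // x0.
  rewrite (take_nth x0 lt_ms); under eq_bigr => x _ do rewrite eqseq_rcons.
  have -> : (s == m) = false by apply/negbTE; apply: contraTneq lt_ms => ->; rewrite ltnn.
  by case: eqP => _ /=; rewrite addn0 ?sum_pred1_nat // big1.
rewrite !take_oversize ?(leqW le_sm) // big1 // => x _.
by case: eqP => // Es; rewrite Es size_rcons ltnn in le_sm.
Qed.

Lemma suff_cons_eq m y w :
  (suff (size m) (y :: w) == m) = ((y :: w) == m) + (suff (size m) w == m) :> nat.
Proof.
rewrite /suff; have [le_mw | lt_wm] := leqP (size m) (size w).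
  have -> : (y :: w == m) = false.
    by apply/negbTE; apply: contraTneq le_mw => <-; rewrite /= ltnn.
  by rewrite [size (y :: w)]/= subSn.
have -> : size w - size m = 0 by lia.
have -> : size (y :: w) - size m = 0 by rewrite /=; lia.
rewrite !drop0; have -> : (w == m) = false.
  by apply/negbTE; apply: contraTneq lt_wm => ->; rewrite ltnn.
by rewrite addn0.
Qed.

Lemma occ_sum_rcons m w :
  occ m w = \sum_(x : S) occ (rcons m x) w + (suff (size m) w == m).
Proof.
elim: w => [|y w IH].
  rewrite occ_nil big1 /=; last by move=> x _; rewrite occ_nil; case: m.
  by rewrite /suff sub0n drop0.
rewrite occ_cons IH eq_take_sum_rcons suff_cons_eq.
under [in RHS]eq_bigr => x _ do rewrite occ_cons size_rcons.
rewrite [in RHS]big_split /=; lia.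
Qed.
End Occurrences.

Section PrefixesSuffixes.
Variable S : finType.
Implicit Types m u v w x : seq S.

Lemma size_pref k w : size (pref k w) <= k.
Proof. by rewrite /pref size_take; case: ltnP => //; lia. Qed.

Lemma size_suff k w : size (suff k w) <= k.
Proof. by rewrite /suff size_drop; lia. Qed.

Lemma pref_eqW k k' u v : k <= k' -> pref k' u = pref k' v -> pref k u = pref k v.
Proof.
by move=> le_kk' Euv; rewrite /pref -(take_takel u le_kk') -(take_takel v le_kk'); congr take.
Qed.

Lemma suff_eqW k k' u v : k <= k' -> suff k' u = suff k' v -> suff k u = suff k v.
Proof.
move=> le_kk' Euv; have suff_suff w : suff k (suff k' w) = suff k w.
  by rewrite /suff size_drop drop_drop; congr drop; lia.
by rewrite -suff_suff Euv suff_suff.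
Qed.

Lemma suff_cat k u v : k <= size v -> suff k (u ++ v) = suff k v.
Proof.
move=> le_kv; rewrite /suff size_cat drop_cat; case: ltnP => [|_]; first lia.
by congr drop; lia.
Qed.

Lemma infix_cat3 m u x v : size m <= (size x).+1 ->
  infix m (u ++ x ++ v) -> infix m (u ++ x) \/ infix m (x ++ v).
Proof.
move=> size_m; elim: u => [|y u IH]; first by right.
rewrite cat_cons infix_consl => /orP [pre_m|/IH [inf_m|]]; last by right.
  left; apply: prefixW; move: pre_m.
  by rewrite !prefixE -cat_cons catA takel_cat // size_cat /=; lia.
by left; rewrite cat_cons infix_consl inf_m orbT.
Qed.
End PrefixesSuffixes.

Definition thr_equiv (S : finType) (T l : nat) (w1 w2 : seq S) :=
  [/\ pref l.-1 w1 = pref l.-1 w2, suff l.-1 w1 = suff l.-1 w2 &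
      forall m : seq S, size m = l ->
        (occ m w1 < T \/ occ m w2 < T) -> occ m w1 = occ m w2].

Section ThresholdEquivalence.
Variables (S : finType) (T : nat).
Implicit Types (m w : seq S) (L : lang S).

Lemma leq_occ_rcons m x w : occ (rcons m x) w <= occ m w.
Proof. by rewrite [occ m w]occ_sum_rcons (bigD1 x) //= -addnA leq_addr. Qed.

Lemma occ_eq_rcons l w1 w2 : suff l w1 = suff l w2 ->
  (forall m, size m = l.+1 -> occ m w1 < T -> occ m w1 = occ m w2) ->
  forall m, size m = l -> occ m w1 < T -> occ m w1 = occ m w2.
Proof.
move=> Es Eocc m size_m lt_T; rewrite !occ_sum_rcons size_m Es; congr (_ + _).
apply: eq_bigr => x _; apply: Eocc; first by rewrite size_rcons size_m.
exact: leq_ltn_trans (leq_occ_rcons _ _ _) lt_T.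
Qed.

Lemma thr_equivSl l w1 w2 : thr_equiv T l.+1 w1 w2 -> thr_equiv T l w1 w2.
Proof.
move=> [Ep Es Eocc]; split; [exact: pref_eqW (leq_pred l) Ep | exact: suff_eqW (leq_pred l) Es |].
move=> m size_m [lt_T|lt_T].
  by apply: (occ_eq_rcons Es _ size_m lt_T) => m' ? ?; apply: Eocc; [|left].
symmetry; apply: (occ_eq_rcons (esym Es) _ size_m lt_T) => m' ? ?.
by symmetry; apply: Eocc; [|right].
Qed.
End ThresholdEquivalence.

Lemma thr_equiv_le (S : finType) T T' l l' (w1 w2 : seq S) :
  T <= T' -> l <= l' -> thr_equiv T' l' w1 w2 -> thr_equiv T l w1 w2.
Proof.
move=> le_T le_l [Ep Es Eocc]; have {Ep Es Eocc} : thr_equiv T l' w1 w2.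
  by split=> // m size_m lt_T; apply: Eocc => //; case: lt_T; [left|right]; exact: leq_trans le_T.
elim: l' le_l => [|l' IH]; first by rewrite leqn0 => /eqP ->.
by rewrite leq_eqVlt => /predU1P [-> //|/IH IHl] /thr_equivSl.
Qed.

Lemma LTT_thr_equiv (S : finType) (L : lang S) :
  LTT L <-> exists T l, [/\ 0 < T, 0 < l &
    forall w1 w2, w1 <> [::] -> w2 <> [::] -> thr_equiv T l w1 w2 -> (L w1 <-> L w2)].
Proof.
split=> [[T [l [T_gt0 [l_gt0 HL]]]] | [T [l [T_gt0 l_gt0 HL]]]]; exists T, l.
  by split=> // w1 w2 nw1 nw2 [Ep Es Eocc]; exact: HL.
by do 2 split=> //; move=> w1 w2 nw1 nw2 Ep Es Eocc; exact: HL.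
Qed.

Lemma LTT_eq (S : finType) (L L' : lang S) : lang_eq L L' -> LTT L' -> LTT L.
Proof.
move=> EL [T [l [T_gt0 [l_gt0 HL]]]]; exists T, l; split=> //; split=> // w1 w2 nw1 nw2 *.
by rewrite (EL _ nw1) (EL _ nw2); exact: HL.
Qed.

Lemma LTT_binop (S : finType) (op : Prop -> Prop -> Prop) (L1 L2 : lang S) :
  (forall A B C D, (A <-> B) -> (C <-> D) -> (op A C <-> op B D)) ->
  LTT L1 -> LTT L2 -> LTT (fun w => op (L1 w) (L2 w)).
Proof.
move=> op_iff /LTT_thr_equiv [T1 [l1 [T1_gt0 l1_gt0 HL1]]].
move=> /LTT_thr_equiv [T2 [l2 [T2_gt0 l2_gt0 HL2]]].
apply/LTT_thr_equiv; exists (maxn T1 T2), (maxn l1 l2); split; [lia|lia|].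
move=> w1 w2 nw1 nw2 Ew; apply: op_iff.
  by apply: HL1 => //; apply: thr_equiv_le Ew; exact: leq_maxl.
by apply: HL2 => //; apply: thr_equiv_le Ew; exact: leq_maxr.
Qed.

Lemma LTT_not (S : finType) (L : lang S) : LTT L -> LTT (fun w => ~ L w).
Proof.
move=> [T [l [T_gt0 [l_gt0 HL]]]]; exists T, l; split=> //; split=> // w1 w2 *.
by rewrite (HL w1 w2).
Qed.

Section WeightedCounts.
Local Open Scope ring_scope.
Variables (S : finType) (l : nat) (alpha : l.-tuple S -> Rdefinitions.R).

Definition wcount (w : seq S) := \sum_(m : l.-tuple S) alpha m * (occ (tval m) w)%:R.

Hypothesis alpha_ge0 : forall m, 0 <= alpha m.

Lemma wcount_ge_term m w : alpha m * (occ (tval m) w)%:R <= wcount w.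
Proof.
by rewrite /wcount (bigD1 m) //= lerDl sumr_ge0 // => m' _; rewrite mulr_ge0.
Qed.

Lemma ler_wcount w w' :
  (forall m : l.-tuple S, (occ (tval m) w' <= occ (tval m) w)%N) -> wcount w' <= wcount w.
Proof. by move=> le_occ; apply: ler_sum => m _; rewrite ler_wpM2l // ler_nat. Qed.

Lemma wcount_le0 w : wcount w <= 0 <-> forall m, 0 < alpha m -> occ (tval m) w = 0%N.
Proof.
split=> [le0 m alpha_gt0 | occ0].
  apply/eqP; rewrite -leqn0 -(ler_nat Rdefinitions.R) -(ler_pM2l alpha_gt0) mulr0.
  exact: le_trans (wcount_ge_term m w) le0.
rewrite /wcount big1 // => m _; have [<-|alpha_gt0] := eqVneq 0 (alpha m); first by rewrite mul0r.
by rewrite occ0 ?mulr0 // lt_neqAle alpha_gt0 alpha_ge0.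
Qed.

Variable theta : Rdefinitions.R.
Hypothesis theta_ge0 : 0 <= theta.

(* Chosen so that this many occurrences of any factor of positive weight already exceed [theta]. *)
Definition wcount_threshold := (\sum_(m : l.-tuple S) Num.bound (theta / alpha m)).+1%N.

Lemma wcount_gt_threshold m w : 0 < alpha m ->
  (wcount_threshold <= occ (tval m) w)%N -> theta < wcount w.
Proof.
move=> alpha_gt0 le_T; apply: lt_le_trans (wcount_ge_term m w).
apply: (@lt_le_trans _ _ (alpha m * wcount_threshold%:R)); last by rewrite ler_pM2l // ler_nat.
rewrite mulrC -ltr_pdivrMr //; apply: lt_le_trans (archi_boundP _) _.
  exact: divr_ge0 theta_ge0 (ltW alpha_gt0).
by rewrite ler_nat; apply: leqW; rewrite /wcount_threshold (bigD1 m) //= leq_addr.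
Qed.

Lemma wcount_thr_equiv w1 w2 :
  (forall m : seq S, size m = l ->
     (occ m w1 < wcount_threshold \/ occ m w2 < wcount_threshold)%N -> occ m w1 = occ m w2) ->
  (wcount w1 <= theta <-> wcount w2 <= theta).
Proof.
move=> Eocc; set T := wcount_threshold.
have [[m [alpha_gt0 le_T1]] | small] := classic (exists m, 0 < alpha m /\ (T <= occ (tval m) w1)%N).
  have le_T2 : (T <= occ (tval m) w2)%N.
    rewrite leqNgt; apply/negP => lt_T.
    by move: le_T1; rewrite (Eocc _ (size_tuple m) (or_intror lt_T)) leqNgt lt_T.
  have := wcount_gt_threshold alpha_gt0 le_T1; have := wcount_gt_threshold alpha_gt0 le_T2.
  by rewrite !ltNge => /negPf-> /negPf->.
suff -> : wcount w1 = wcount w2 by [].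
apply: eq_bigr => m _; have [<-|alpha_neq0] := eqVneq 0 (alpha m); first by rewrite !mul0r.
rewrite Eocc ?size_tuple //; left; rewrite ltnNge; apply/negP => le_T.
by apply: small; exists m; rewrite lt_neqAle alpha_neq0 alpha_ge0.
Qed.
End WeightedCounts.

Lemma wcount_indicator (S : finType) l (m0 : l.-tuple S) w :
  (wcount (fun m : l.-tuple S => if tval m == tval m0 then 1 else 0) w = (occ (tval m0) w)%:R)%R.
Proof.
rewrite /wcount (bigD1 m0) //= eqxx mul1r big1 ?addr0 // => m ne_m.
by rewrite (inj_eq val_inj) (negPf ne_m) mul0r.
Qed.

Lemma LLT_LTT : csub LLT LTT.
Proof.
move=> S L [l [pi [sigma [alpha [theta [_ [_ [alpha_ge0 [theta_ge0 EL]]]]]]]]].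
apply/LTT_thr_equiv; exists (wcount_threshold alpha theta), l.+1; split=> //.
move=> w1 w2 nw1 nw2 /thr_equivSl [Ep Es Eocc].
rewrite (EL _ nw1) (EL _ nw2) /LLin Ep Es -/(wcount alpha w1) -/(wcount alpha w2).
by rewrite (wcount_thr_equiv alpha_ge0 theta_ge0 Eocc); split=> -[_ rest].
Qed.

Lemma SLT_LLT : csub SLT LLT.
Proof.
move=> S L [l [pi [sigma [mu [_ [_ [_ [_ HL]]]]]]]].
pose alpha (m : l.-tuple S) : Rdefinitions.R :=
  if excluded_middle_informative (mu (tval m)) then 0%R else 1%R.
have alpha_ge0 m : (0 <= alpha m)%R by rewrite /alpha; case: excluded_middle_informative.
have alpha_gt0 m : (0 < alpha m)%R <-> ~ mu (tval m).
  by rewrite /alpha; case: excluded_middle_informative => mu_m; rewrite ?ltxx ?ltr01.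
have infixes_mu w : (forall m, infixes l w m -> mu m) <-> (wcount alpha w <= 0)%R.
  rewrite wcount_le0 //; split=> [mu_w m /alpha_gt0 not_mu | occ0 m [size_m inf_m]].
    apply/eqP; rewrite -leqn0 leqNgt occ_gt0; apply/negP => inf_m.
    by apply/not_mu/mu_w; rewrite /infixes size_tuple.
  have /eqP size_m' := size_m; apply: NNPP => not_mu.
  have /alpha_gt0/occ0 : ~ mu (tval (Tuple size_m')) by [].
  by move: inf_m; rewrite -occ_gt0 /= => /[swap] ->.
exists l, (fun u => pi u /\ size u <= l.-1), (fun u => sigma u /\ size u <= l.-1), alpha, 0%R.
do 2 (split; first by move=> u []).
do 2 split=> //; move=> w nw.
rewrite HL // /LLin -/(wcount alpha w) -infixes_mu size_pref size_suff.
by split=> [[? [? ?]] | [_ [[? _] [[? _] ?]]]].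
Qed.

Definition down_closed (S : finType) (l : nat) (L : lang S) :=
  forall w w' : seq S, w <> [::] -> w' <> [::] ->
    pref l.-1 w' = pref l.-1 w -> suff l.-1 w' = suff l.-1 w ->
    (forall m : seq S, size m = l -> occ m w' <= occ m w) -> L w -> L w'.

Section DownClosed.
Variable S : finType.
Implicit Types L : lang S.

Lemma down_closedS l L : down_closed l L -> down_closed l.+1 L.
Proof.
move=> HL w w' nw nw' Ep Es le_occ; apply: HL => //.
- exact: pref_eqW (leq_pred l) Ep.
- exact: suff_eqW (leq_pred l) Es.
move=> m size_m; rewrite [occ m w']occ_sum_rcons [occ m w]occ_sum_rcons size_m Es.
by apply: leq_add => //; apply: leq_sum => x _; apply: le_occ; rewrite size_rcons size_m.
Qed.

Lemma down_closed_le l l' L : l <= l' -> down_closed l L -> down_closed l' L.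
Proof.
elim: l' => [|l' IH]; first by rewrite leqn0 => /eqP ->.
by rewrite leq_eqVlt => /predU1P [-> //|/IH IHl] /IHl /down_closedS.
Qed.

Lemma LLT_down_closed L : LLT L -> exists l, down_closed l L.
Proof.
move=> [l [pi [sigma [alpha [theta [_ [_ [alpha_ge0 [_ EL]]]]]]]]].
exists l => w w' nw nw' Ep Es le_occ /(EL _ nw) [_ [pi_w [sigma_w le_theta]]].
apply/(EL _ nw'); split=> //; rewrite Ep Es; split=> //; split=> //.
apply: le_trans le_theta; apply: ler_wcount => // m; apply: le_occ; exact: size_tuple.
Qed.

Lemma LLT_UI_down_closed L : LLT_UI L -> exists l, down_closed l L.
Proof.
move=> [L' [G EL]]; suff [l HL] : exists l, down_closed l L'.
  by exists l => w w' nw nw' Ep Es le_occ /(EL _ nw) Lw; apply/(EL _ nw'); exact: HL Lw.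
elim: G {EL} => {L'}
  [L' /LLT_down_closed // | L1 L2 _ [l1 H1] _ [l2 H2] | L1 L2 _ [l1 H1] _ [l2 H2]];
  exists (maxn l1 l2) => w w' nw nw' Ep Es le_occ;
  have := down_closed_le (leq_maxl l1 l2) H1 nw nw' Ep Es le_occ;
  have := down_closed_le (leq_maxr l1 l2) H2 nw nw' Ep Es le_occ; tauto.
Qed.
End DownClosed.

Definition once n := nseq n false ++ true :: nseq n false.
Definition twice n := nseq n false ++ true :: nseq n false ++ true :: nseq n false.

Lemma once_neq0 n : once n <> [::]. Proof. by case: n. Qed.
Lemma twice_neq0 n : twice n <> [::]. Proof. by case: n. Qed.

Lemma count_once n : count_mem true (once n) = 1.
Proof. by rewrite count_cat /= !count_nseq. Qed.

Lemma count_twice n : count_mem true (twice n) = 2.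
Proof. by rewrite count_cat /= count_cat /= !count_nseq. Qed.

Lemma once_twice_local l n : l <= n ->
  [/\ pref l.-1 (once n) = pref l.-1 (twice n),
      forall m, infixes l (once n) m <-> infixes l (twice n) m &
      suff l.-1 (once n) = suff l.-1 (twice n)].
Proof.
move=> le_ln; have le_pn : l.-1 <= size (nseq n false) by rewrite size_nseq; lia.
split.
- by rewrite /pref !takel_cat.
- move=> m; split=> -[size_m inf_m]; split=> //.
    by apply: infix_trans inf_m _; rewrite /twice -cat_cons catA prefix_infix.
  have E : twice n = (nseq n false ++ [:: true]) ++ nseq n false ++ (true :: nseq n false).
    by rewrite /twice -catA.
  rewrite E in inf_m; case: (infix_cat3 _ inf_m); rewrite ?size_nseq ?size_m //; first lia.
  by rewrite -catA.
- have -> : once n = (nseq n false ++ [:: true]) ++ nseq n false by rewrite /once -catA.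
  have -> : twice n = (nseq n false ++ true :: nseq n false ++ [:: true]) ++ nseq n false.
    by rewrite /twice -catA cat_cons -catA.
  by rewrite !suff_cat.
Qed.

Lemma SLT_LT : csub SLT LT.
Proof.
move=> S L [l [pi [sigma [mu [l_gt0 [_ [_ [_ HL]]]]]]]]; exists l; split=> //.
move=> w1 w2 nw1 nw2 Ep Einf Es; rewrite (HL _ nw1) (HL _ nw2) Ep Es.
by split=> -[pi_w [mu_w sigma_w]]; split=> //; split=> // m /Einf /mu_w.
Qed.

Lemma LT_once_twice (L : lang bool) :
  LT L -> exists l, forall n, l <= n -> (L (once n) <-> L (twice n)).
Proof.
move=> [l [_ HL]]; exists l => n le_ln; have [Ep Einf Es] := once_twice_local le_ln.
by apply: HL => //; [exact: once_neq0 | exact: twice_neq0].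
Qed.

Section BasicLLT.
Variable S : finType.
Implicit Types (L : lang S) (p : seq S).

Lemma LLT_eq L L' : lang_eq L L' -> LLT L' -> LLT L.
Proof.
move=> EL [l [pi [sigma [alpha [theta [Hpi [Hsigma [alpha_ge0 [theta_ge0 EL']]]]]]]]].
exists l, pi, sigma, alpha, theta; do 4 split=> //.
by move=> w nw; rewrite EL // EL'.
Qed.

Lemma LLT_occ_le l (m0 : l.-tuple S) c : LLT (fun w => occ (tval m0) w <= c).
Proof.
exists l, (fun u => size u <= l.-1), (fun u => size u <= l.-1),
  (fun m : l.-tuple S => if tval m == tval m0 then 1%R else 0%R), c%:R%R.
do 2 split=> //; split; first by move=> m; case: ifP.
split=> // w nw; rewrite /LLin -/(wcount _ w) wcount_indicator ler_nat.
by split=> [le_c | [_ [_ [_ le_c]]]] //; rewrite size_pref size_suff.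
Qed.

Lemma LLT_pref l p : LLT (fun w => pref l.-1 w = p).
Proof.
exists l, (fun u => u = p /\ size u <= l.-1), (fun u => size u <= l.-1), (fun _ => 0%R), 0%R.
split; first by move=> u [].
do 3 split=> //; move=> w nw.
rewrite /LLin big1 => [|m _]; last by rewrite mul0r.
by split=> [<- | [_ [[] //]]]; rewrite size_pref size_suff.
Qed.

Lemma LLT_suff l p : LLT (fun w => suff l.-1 w = p).
Proof.
exists l, (fun u => size u <= l.-1), (fun u => u = p /\ size u <= l.-1), (fun _ => 0%R), 0%R.
split=> //; split; first by move=> u [].
do 2 split=> //; move=> w nw.
rewrite /LLin big1 => [|m _]; last by rewrite mul0r.
by split=> [<- | [_ [_ [[] //]]]]; rewrite size_pref size_suff.
Qed.

Lemma LLT_full : LLT (fun _ : seq S => True).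
Proof.
exists 0, (fun u => size u <= 0), (fun u => size u <= 0), (fun _ => 0%R), 0%R.
do 4 split=> //; move=> w nw; rewrite /LLin big1 => [|m _]; last by rewrite mul0r.
by split=> // _; rewrite size_pref size_suff.
Qed.
End BasicLLT.

Definition at_most_one_true : lang bool := fun w => count_mem true w <= 1.

Lemma at_most_one_true_LLT : LLT at_most_one_true.
Proof.
apply: (LLT_eq _ (LLT_occ_le [tuple true] 1)) => w _.
by rewrite /at_most_one_true occ_seq1.
Qed.

Lemma at_most_one_true_once_twice (L : lang bool) : lang_eq L at_most_one_true ->
  ~ exists l, forall n, l <= n -> (L (once n) <-> L (twice n)).
Proof.
move=> EL [l Hl]; have := Hl l (leqnn l).
rewrite (EL _ (@once_neq0 l)) (EL _ (@twice_neq0 l)) /at_most_one_true count_once count_twice.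
by case=> /(_ isT).
Qed.

Lemma at_most_one_true_notLT : ~ LT at_most_one_true.
Proof. by move/LT_once_twice; apply: at_most_one_true_once_twice. Qed.

Lemma at_most_one_true_notSLT_U : ~ SLT_U at_most_one_true.
Proof.
move=> [L [G EL]]; apply: (at_most_one_true_once_twice (L := L)) => [w nw|]; first by rewrite EL.
elim: G {EL} => [L' /SLT_LT /LT_once_twice // | L1 L2 _ [l1 H1] _ [l2 H2]].
exists (maxn l1 l2) => n; rewrite geq_max => /andP [le_l1 le_l2].
by rewrite (H1 _ le_l1) (H2 _ le_l2).
Qed.

Definition true_at_border : lang bool := fun w => pref 1 w = [:: true] \/ suff 1 w = [:: true].

Lemma true_at_border_LLT_U : LLT_U true_at_border.
Proof.
exists true_at_border; split=> //.
by apply: gU_union; apply: gU_base; [exact: LLT_pref 2 _ | exact: LLT_suff 2 _].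
Qed.

(* [true 0^n] and [0^n true] are accepted, and [0^n] has the prefix of the first and the
   suffix and (smaller) factor counts of the second. *)
Lemma true_at_border_notLLT : ~ LLT true_at_border.
Proof.
move=> [l [pi [sigma [alpha [theta [_ [_ [alpha_ge0 [_ EL]]]]]]]]].
set w := nseq l.+1 false; have nw : w <> [::] by [].
have le_lw : l.-1 <= size w by rewrite size_nseq; lia.
have [_ [pi_w _]] : LLin pi sigma alpha theta (w ++ [:: true]).
  by apply/EL => //; right; rewrite suff_cat.
have [_ [_ [sigma_w le_theta]]] : LLin pi sigma alpha theta ([:: true] ++ w).
  by apply/EL => //; left.
have : true_at_border w.
  apply/(EL _ nw); split=> //; split; first by rewrite /pref takel_cat in pi_w.
  split; first by rewrite suff_cat in sigma_w.
  by apply: le_trans le_theta; apply: ler_wcount => // m; exact: leq_occ_catl.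
by rewrite /true_at_border /w /suff size_nseq drop_nseq subn1 /= subSnn; case.
Qed.

Definition has_true : lang bool := fun w => true \in w.

Lemma has_true_occ w : has_true w <-> 0 < occ [:: true] w.
Proof. by rewrite /has_true occ_gt0 infix1s. Qed.

Lemma has_true_LTT : LTT has_true.
Proof.
exists 1, 1; do 2 split=> //; move=> w1 w2 _ _ _ _ Eocc.
have := Eocc [:: true] erefl; rewrite !has_true_occ.
case: (occ [:: true] w1) => [|a]; case: (occ [:: true] w2) => [|b] //=.
- by move=> /(_ (or_introl isT)).
- by move=> /(_ (or_intror isT)).
Qed.

Lemma has_true_LT : LT has_true.
Proof.
exists 1; split=> // w1 w2 _ _ _ Einf _.
have E w : has_true w <-> infixes 1 w [:: true].
  by rewrite /has_true /infixes -infix1s; split=> // -[].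
by rewrite !E Einf.
Qed.

(* [0^n] has the prefix and suffix of [0^n true 0^n] and fewer factors. *)
Lemma has_true_notLLT_UI : ~ LLT_UI has_true.
Proof.
move=> /LLT_UI_down_closed [l HL].
set w := nseq l.+1 false; have le_lw : l.-1 <= size w by rewrite size_nseq; lia.
suff : has_true w by rewrite /has_true mem_nseq.
apply: (HL (once l.+1)) => //.
- by rewrite /pref takel_cat.
- by rewrite /once -cat1s catA suff_cat.
- by move=> m _; apply: leq_occ_catr.
by rewrite /has_true mem_cat inE orbT.
Qed.

Section Closure.
Variable S : finType.
Implicit Types L : lang S.

Lemma closeUIC_LLT L : LLT L -> closeUIC LLT L.
Proof. by move=> LLT_L; exists L; split=> //; apply: gUIC_base. Qed.

Lemma closeUIC_eq L L' : lang_eq L L' -> closeUIC LLT L' -> closeUIC LLT L.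
Proof. by move=> EL [L'' [G EL']]; exists L''; split=> // w nw; rewrite EL // EL'. Qed.

Lemma closeUIC_or L1 L2 :
  closeUIC LLT L1 -> closeUIC LLT L2 -> closeUIC LLT (fun w => L1 w \/ L2 w).
Proof.
move=> [A [GA EA]] [B [GB EB]]; exists (fun w => A w \/ B w); split; first exact: gUIC_union.
by move=> w nw; rewrite EA // EB.
Qed.

Lemma closeUIC_and L1 L2 :
  closeUIC LLT L1 -> closeUIC LLT L2 -> closeUIC LLT (fun w => L1 w /\ L2 w).
Proof.
move=> [A [GA EA]] [B [GB EB]]; exists (fun w => A w /\ B w); split; first exact: gUIC_inter.
by move=> w nw; rewrite EA // EB.
Qed.

Lemma closeUIC_not L : closeUIC LLT L -> closeUIC LLT (fun w => ~ L w).
Proof.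
move=> [A [GA EA]]; exists (fun w => ~ A w); split; first exact: gUIC_compl.
by move=> w nw; rewrite EA.
Qed.

Lemma closeUIC_propl (P : Prop) L : closeUIC LLT L -> closeUIC LLT (fun w => P /\ L w).
Proof.
move=> cl_L; have [p|np] := classic P.
  by apply: closeUIC_eq cl_L => w _; split=> [[]|].
apply: (closeUIC_eq _ (closeUIC_not (closeUIC_LLT (LLT_full S)))) => w _.
by split=> [[]|/(_ I)].
Qed.

Lemma closeUIC_impl (P : Prop) L : closeUIC LLT L -> closeUIC LLT (fun w => P -> L w).
Proof.
move=> cl_L; have [p|np] := classic P.
  by apply: closeUIC_eq cl_L => w _; split=> [/(_ p)|].
by apply: (closeUIC_eq _ (closeUIC_LLT (LLT_full S))) => w _.
Qed.

Lemma closeUIC_big_or (I : eqType) (s : seq I) (F : I -> lang S) :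
  (forall i, i \in s -> closeUIC LLT (F i)) ->
  closeUIC LLT (fun w => exists2 i, i \in s & F i w).
Proof.
elim: s => [|i s IH] cl_F.
  apply: closeUIC_eq (closeUIC_propl False (closeUIC_LLT (LLT_full S))) => w _.
  by split=> [[]|[]].
have cl_s : closeUIC LLT (fun w => exists2 j, j \in s & F j w).
  by apply: IH => j s_j; apply: cl_F; rewrite inE s_j orbT.
apply: closeUIC_eq (closeUIC_or (cl_F i (mem_head i s)) cl_s) => w _.
split=> [[j] | [F_i | [j s_j F_j]]].
- by rewrite inE => /predU1P [-> | s_j] F_j; [left | right; exists j].
- by exists i; rewrite ?mem_head.
- by exists j; rewrite // inE s_j orbT.
Qed.

Lemma closeUIC_big_and (I : eqType) (s : seq I) (F : I -> lang S) :
  (forall i, i \in s -> closeUIC LLT (F i)) ->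
  closeUIC LLT (fun w => forall i, i \in s -> F i w).
Proof.
elim: s => [|i s IH] cl_F; first by apply: closeUIC_eq (closeUIC_LLT (LLT_full S)) => w _.
have cl_s : closeUIC LLT (fun w => forall j, j \in s -> F j w).
  by apply: IH => j s_j; apply: cl_F; rewrite inE s_j orbT.
apply: closeUIC_eq (closeUIC_and (cl_F i (mem_head i s)) cl_s) => w _.
split=> [F_all | [F_i F_s] j].
  by split=> [|j s_j]; apply: F_all; rewrite inE ?eqxx ?s_j ?orbT.
by rewrite inE => /predU1P [-> | /F_s].
Qed.

Lemma closeUIC_minn_occ l (m0 : l.-tuple S) T k : k <= T ->
  closeUIC LLT (fun w => minn (occ (tval m0) w) T = k).
Proof.
move=> le_kT.
have cl_ge := closeUIC_impl (0 < k) (closeUIC_not (closeUIC_LLT (LLT_occ_le m0 k.-1))).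
have cl_le := closeUIC_impl (k < T) (closeUIC_LLT (LLT_occ_le m0 k)).
by apply: closeUIC_eq (closeUIC_and cl_ge cl_le) => w _; lia.
Qed.
End Closure.

Fixpoint words_upto (S : finType) (n : nat) : seq (seq S) :=
  if n is n'.+1 then [::] :: [seq x :: s | x <- enum S, s <- words_upto S n'] else [:: [::]].

Lemma words_uptoP (S : finType) n (u : seq S) : size u <= n -> u \in words_upto S n.
Proof.
elim: n u => [|n IH] [|x u] //= size_u; rewrite inE; apply/orP; right.
by apply: (allpairs_f (fun x s => x :: s)); [rewrite mem_enum | exact: IH].
Qed.

Section ThresholdClasses.
Variables (S : finType) (T l : nat).

Definition thr_key := ((seq S * seq S) * {ffun l.-tuple S -> 'I_T.+1})%type.

Definition thr_class (k : thr_key) (w : seq S) :=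
  [/\ pref l.-1 w = k.1.1, suff l.-1 w = k.1.2 &
      forall m : l.-tuple S, minn (occ (tval m) w) T = k.2 m].

Definition thr_keys : seq thr_key :=
  [seq (ps, f) | ps <- [seq (p, s) | p <- words_upto S l.-1, s <- words_upto S l.-1],
                 f <- enum {ffun l.-tuple S -> 'I_T.+1}].

Lemma thr_class_equiv k w1 w2 : thr_class k w1 -> thr_class k w2 -> thr_equiv T l w1 w2.
Proof.
move=> [Ep1 Es1 Eo1] [Ep2 Es2 Eo2]; split; [by rewrite Ep1 Ep2 | by rewrite Es1 Es2 |].
move=> m size_m; have /eqP size_m' := size_m.
have := Eo1 (Tuple size_m'); have := Eo2 (Tuple size_m'); rewrite /= => <-; lia.
Qed.

Lemma thr_class_of w : exists2 k, k \in thr_keys & thr_class k w.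
Proof.
exists ((pref l.-1 w, suff l.-1 w), [ffun m => inord (minn (occ (tval m) w) T)]).
  apply: (allpairs_f (fun ps f => (ps, f))); last by rewrite mem_enum.
  by apply: (allpairs_f (fun p s => (p, s))); apply: words_uptoP; rewrite ?size_pref ?size_suff.
by split=> // m; rewrite ffunE inordK // ltnS geq_minr.
Qed.

Lemma closeUIC_thr_class k : closeUIC LLT (thr_class k).
Proof.
have cl_occ := closeUIC_big_and (s := enum {: l.-tuple S})
  (fun m _ => closeUIC_minn_occ (T := T) m (ltn_ord (k.2 m))).
have cl_ps := closeUIC_and (closeUIC_LLT (LLT_pref l k.1.1)) (closeUIC_LLT (LLT_suff l k.1.2)).
apply: closeUIC_eq (closeUIC_and cl_ps cl_occ) => w _; split.
  by move=> [Ep Es Eo]; split=> [|m _]; [split | apply: Eo].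
by move=> [[Ep Es] Eo]; split=> // m; apply: Eo; rewrite mem_enum.
Qed.
End ThresholdClasses.

Lemma LTT_closeUIC : csub LTT (closeUIC LLT).
Proof.
move=> S L [T [l [_ [_ HL]]]].
pose meets (k : thr_key S T l) := exists w0, [/\ w0 <> [::], L w0 & thr_class k w0].
apply: (@closeUIC_eq _ _ (fun w => exists2 k, k \in thr_keys S T l & meets k /\ thr_class k w)).
  move=> w nw; split=> [Lw | [k _ [[w0 [nw0 Lw0 k_w0]] k_w]]].
    by have [k keys_k k_w] := thr_class_of T l w; exists k => //; split=> //; exists w.
  by case: (thr_class_equiv k_w0 k_w) => Ep Es Eo; apply/(HL w0 w nw0 nw Ep Es Eo).
by apply: closeUIC_big_or => k _; apply: closeUIC_propl; exact: closeUIC_thr_class.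
Qed.

Section Generated.
Variables (C : lclass) (S : finType).
Implicit Type L : lang S.

Lemma gen_U_mono (C' : lclass) L : csub C C' -> gen_U C L -> gen_U C' L.
Proof.
by move=> sCC'; elim=> {L} [L /sCC' | L1 L2 _ H1 _ H2]; [exact: gU_base | exact: gU_union].
Qed.

Lemma gen_U_UI L : gen_U C L -> gen_UI C L.
Proof. by elim=> {L} [L | L1 L2 _ H1 _ H2]; [exact: gUI_base | exact: gUI_union]. Qed.

Lemma gen_UI_UIC L : gen_UI C L -> gen_UIC C L.
Proof.
by elim=> {L} [L | L1 L2 _ H1 _ H2 | L1 L2 _ H1 _ H2];
  [exact: gUIC_base | exact: gUIC_union | exact: gUIC_inter].
Qed.
End Generated.

Lemma closeU_base (C : lclass) : csub C (closeU C).
Proof. by move=> S L CL; exists L; split=> //; exact: gU_base. Qed.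

Lemma closeUIC_LTT : csub (closeUIC LLT) LTT.
Proof.
move=> S L [L' [G EL]]; apply: (LTT_eq EL).
elim: G {EL} => {L'} [L' /LLT_LTT // | L1 L2 _ H1 _ H2 | L1 L2 _ H1 _ H2 | L1 _ H1].
- by apply: LTT_binop => // A B C D -> ->.
- by apply: LTT_binop => // A B C D -> ->.
- exact: LTT_not.
Qed.

Lemma LLT_U_LLT_UI : csub LLT_U LLT_UI.
Proof. by move=> S L [L' [G EL]]; exists L'; split=> //; exact: gen_U_UI. Qed.

Lemma LLT_UI_LTT : csub LLT_UI LTT.
Proof.
by move=> S L [L' [G EL]]; apply: closeUIC_LTT; exists L'; split=> //; exact: gen_UI_UIC.
Qed.

Lemma SLT_U_LLT_U : csub SLT_U LLT_U.
Proof. by move=> S L [L' [G EL]]; exists L'; split=> //; exact: gen_U_mono SLT_LLT G. Qed.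

Theorem mainTheorem9 :
  (csubneq SLT LLT /\ csubneq LLT LLT_U /\ csub LLT_U LLT_UI /\ csubneq LLT_UI LTT /\
   csubneq SLT_U LLT_U) /\
  (cincomparable LLT LT /\ cincomparable LLT_U LT) /\
  ceq LTT (closeUIC LLT).
Proof.
have LLT_LLT_U : csub LLT LLT_U := @closeU_base LLT.
have has_true_notLLT_U : ~ LLT_U has_true by move/LLT_U_LLT_UI; exact: has_true_notLLT_UI.
split; [split; [|split; [|split; [|split]]] | split].
- split; first exact: SLT_LLT.
  exists _, at_most_one_true; split; first exact: at_most_one_true_LLT.
  by move/(@closeU_base SLT); exact: at_most_one_true_notSLT_U.
- split; first exact: LLT_LLT_U.
  by exists _, true_at_border; split; [exact: true_at_border_LLT_U | exact: true_at_border_notLLT].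
- exact: LLT_U_LLT_UI.
- split; first exact: LLT_UI_LTT.
  by exists _, has_true; split; [exact: has_true_LTT | exact: has_true_notLLT_UI].
- split; first exact: SLT_U_LLT_U.
  exists _, at_most_one_true; split; last exact: at_most_one_true_notSLT_U.
  exact: LLT_LLT_U at_most_one_true_LLT.
- split; split=> sub.
  + exact/at_most_one_true_notLT/sub/at_most_one_true_LLT.
  + exact/has_true_notLLT_U/LLT_LLT_U/sub/has_true_LT.
  + exact/at_most_one_true_notLT/sub/LLT_LLT_U/at_most_one_true_LLT.
  + exact/has_true_notLLT_U/sub/has_true_LT.
- by move=> S L; split; [exact: LTT_closeUIC | exact: closeUIC_LTT].
Qed.
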